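(* Let $G=\overline{B(K_m,K_n)}$ be word-representable and let $S$ be a semi-transitive orientation of $G$. Let $x,y$ be vertices of the same clique (say $K_m$) such that $x$ is of type A, $y$ is of type B (with respect to the other clique $K_n$), and the edge between them is oriented $y\to x$. Then $x$ and $y$ have no common neighbour in the other clique $K_n$.
   Context: $\overline{B(K_m,K_n)}$ denotes a graph whose vertex set is the disjoint union of two cliques $K_m$ and $K_n$ with arbitrary edges between them. An orientation is semi-transitive if it is acyclic and shortcut-free, where a shortcut is an induced subgraph on vertices $v_0,\dots,v_t$ ($t\ge 3$) such that $v_0\to\cdots\to v_t$ is a directed path, $v_0\to v_t$ is an edge, and some pair $v_i,v_j$ is non-adjacent. Such an orientation induces a transitive orientation on each clique. For a vertex $x$ in one clique and the other clique $K'$ with Hamiltonian path $p_1\to\cdots\to p_l$: $x$ is of type A if its neighbours in $K'$ are consecutive vertices $p_a,\dots,p_b$ of this path (possibly none) and all edges between $x$ and them are directed away from $x$; type B if the same holds with these edges directed towards $x$. *)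

From mathcomp Require Import all_boot.
Set Implicit Arguments. Unset Strict Implicit. Unset Printing Implicit Defensive.

Section Defs.
Variable T : finType.

Definition simple_graph (adj : rel T) : Prop :=
  (forall u v, adj u v = adj v u) /\ (forall u, ~~ adj u u).

(* Graph \overline{B(K_m,K_n)}: vertex set is the disjoint union of V1, V2,
   each inducing a clique; arbitrary edges between them. *)
Definition co_bipartite_two_cliques (adj : rel T) (V1 V2 : {set T}) : Prop :=
  simple_graph adj /\ V1 :&: V2 = set0 /\ V1 :|: V2 = setT /\
  (forall u v, u \in V1 -> v \in V1 -> u != v -> adj u v) /\
  (forall u v, u \in V2 -> v \in V2 -> u != v -> adj u v).

Definition alternate (w : seq T) (x y : T) : bool :=
  match filter (fun a => (a == x) || (a == y)) w with
  | [::] => true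
  | a :: r => path (fun a b => a != b) a r
  end.

Definition word_representable (adj : rel T) : Prop :=
  exists w : seq T, (forall x, x \in w) /\
    (forall x y, x != y -> (adj x y <-> alternate w x y)).

Definition orientation (adj o : rel T) : Prop :=
  forall u v, adj u v = (o u v || o v u) /\ ~~ (o u v && o v u).

Definition acyclic (o : rel T) : Prop :=
  ~ (exists (x : T) (s : seq T), s != [::] /\ path o x s /\ last x s = x).

Definition shortcut (adj o : rel T) (v0 : T) (s : seq T) : Prop :=
  3 <= size s /\ path o v0 s /\ o v0 (last v0 s) /\
  exists u v, [/\ u \in v0 :: s, v \in v0 :: s, u != v & ~~ adj u v].

Definition semi_transitive (adj o : rel T) : Prop :=
  orientation adj o /\ acyclic o /\ forall v0 s, ~ shortcut adj o v0 s.

Definition ham_path (o : rel T) (K : {set T}) (p : seq T) : Prop :=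
  uniq p /\ p =i K /\
  match p with [::] => True | a :: r => path o a r end.

Definition consecutive_nbrs (adj o : rel T) (K : {set T}) (x : T) : Prop :=
  exists p, ham_path o K p /\
    exists a b : nat, forall i, i < size p ->
      adj x (nth x p i) = (a <= i <= b).

Definition typeA (adj o : rel T) (K : {set T}) (x : T) : Prop :=
  consecutive_nbrs adj o K x /\ (forall z, z \in K -> adj x z -> o x z).

Definition typeB (adj o : rel T) (K : {set T}) (x : T) : Prop :=
  consecutive_nbrs adj o K x /\ (forall z, z \in K -> adj x z -> o z x).

End Defs.

From mathcomp Require Import all_boot.

Lemma acyclic_no_triangle {T : finType} {o : rel T} {a b c : T} :
  acyclic o -> o a b -> o b c -> o c a -> False.
Proof.
move=> acyc oab obc oca; apply: acyc.
by exists a, [:: b; c; a]; rewrite /= oab obc oca.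
Qed.

Theorem mainTheorem11 (T : finType) (adj : rel T) (V1 V2 : {set T})
  (o : rel T) (x y : T) :
  co_bipartite_two_cliques adj V1 V2 ->
  word_representable adj ->
  semi_transitive adj o ->
  x \in V1 -> y \in V1 ->
  typeA adj o V2 x -> typeB adj o V2 y ->
  o y x ->
  ~ (exists z, [/\ z \in V2, adj x z & adj y z]).
Proof.
move=> _ _ [_ [acyc _]] _ _ [_ xA] [_ yB] oyx [z [zV2 xz yz]].
exact: (acyclic_no_triangle acyc oyx (xA z zV2 xz) (yB z zV2 yz)).
Qed.
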